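(* Given any member of an IQP$^*$ circuit family, there is an efficient (polynomial-size) implementation of it in MBQC in which all single-qubit measurements are in fixed bases and are non-adaptive. That is, the measurements can be performed simultaneously, and linear classical post-processing of the outcomes yields exactly the output distribution of the IQP$^*$ circuit.
   Context: IQP$^*$ circuit family. The family is indexed by the input length $n$. For input $x\in\{0,1\}^n$, the circuit proceeds as follows. - It acts on $q=\mathrm{poly}(n)$ qubits prepared in $|x\rangle|0\rangle^{\otimes(q-n)}$. - It applies a unitary $U_n$, which depends only on $n$. $U_n$ is a product of $\mathrm{poly}(n)$ gates $D(\theta_z,z)=e^{i\theta_z X[z]}$. - In each gate, $z\in\{0,1\}^q$, $X[z]=\bigotimes_j X^{z_j}$ with $X$ the Pauli-$X$ operator, and $\theta_z\in(0,2\pi]$ has a $\mathrm{poly}(n)$-size description. - It measures every qubit in the computational basis. MBQC. A multi-qubit resource state (e.g. a cluster/graph state, made by preparing qubits in $|+\rangle$ and applying controlled-$Z$ gates) is prepared. Single-qubit projective measurements are then performed on it, and the outcomes are processed by linear classical side-processing (XOR and NOT gates). Non-adaptive means no measurement basis depends on the outcomes of other measurements. *)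

From HB Require Import structures.
From mathcomp Require Import all_boot all_order all_algebra.
From mathcomp Require Import complex.
From mathcomp Require Import reals trigo.

Set Implicit Arguments.
Unset Strict Implicit.
Unset Printing Implicit Defensive.

Import Order.TTheory GRing.Theory Num.Theory.
Local Open Scope ring_scope.
Local Open Scope complex_scope.

(* Computational basis of q qubits: bit strings w : 'I_q -> bool.       *)
Definition bits (q : nat) := {ffun 'I_q -> bool}.
Definition state (R : realType) (q : nat) := bits q -> R[i].

Definition normsq (R : realType) (z : R[i]) : R :=
  let: Complex a b := z in a ^+ 2 + b ^+ 2.

Definition cconj (R : realType) (z : R[i]) : R[i] := let: Complex a b := z in Complex a (- b).

Definition ket (R : realType) (q : nat) (w : bits q) : state R q :=
  fun v => if v == w then 1 else 0.

Definition bxor (q : nat) (u v : bits q) : bits q := [ffun j => u j (+) v j].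

(* X[z] = tensor_j X^{z_j}: acts on basis states by |w> |-> |w xor z>. *)
Definition Xz (R : realType) (q : nat) (z : bits q) (psi : state R q) : state R q :=
  fun w => psi (bxor w z).

(* D(theta, z) = exp(i theta X[z]) = cos(theta) I + i sin(theta) X[z]
   (as X[z]^2 = I). *)
Definition Dgate (R : realType) (q : nat) (theta : R) (z : bits q)
    (psi : state R q) : state R q :=
  fun w => (cos theta)%:C * psi w + 'i * (sin theta)%:C * Xz z psi w.

(* a gate D(theta_z, z) is recorded as the pair (theta_z, z) *)
Definition gate (R : realType) (q : nat) := (R * bits q)%type.

Definition gate_ok (R : realType) (q : nat) (g : gate R q) : Prop :=
  0 < g.1 /\ g.1 <= 2 * pi.

(* U = product of the gates; the gates of the list are applied in order,
   the head first. *)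
Definition apply_circuit (R : realType) (q : nat) (gs : seq (gate R q))
    (psi : state R q) : state R q :=
  foldl (fun phi g => Dgate g.1 g.2 phi) psi gs.

(* input |x>|0>^{q-n}: qubit j carries x_j for j < n and 0 otherwise *)
Definition input_bit (n : nat) (x : bits n) (k : nat) : bool :=
  if (insub k : option 'I_n) is Some i then x i else false.

Definition iqp_input (n q : nat) (x : bits n) : bits q :=
  [ffun j : 'I_q => input_bit x (val j)].

Definition iqp_prob (R : realType) (n q : nat) (gs : seq (gate R q))
    (x : bits n) (y : bits q) : R :=
  normsq (apply_circuit gs (@ket R q (@iqp_input n q x)) y).

Definition plus_state (R : realType) (N : nat) : state R N :=
  fun _ => ((Num.sqrt (2 : R))^-1 ^+ N)%:C.

Definition CZ (R : realType) (N : nat) (i j : 'I_N) (psi : state R N) : state R N :=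
  fun w => (if w i && w j then -1 else 1) * psi w.

(* the (undirected) edges {i,j}, i < j, of a graph given by a relation E
   (the relation is read symmetrically: {i,j} is an edge iff E i j || E j i) *)
Definition edges (N : nat) (E : rel 'I_N) : seq ('I_N * 'I_N) :=
  [seq e : 'I_N * 'I_N <- enum {: 'I_N * 'I_N}
     | (e.1 < e.2)%N && (E e.1 e.2 || E e.2 e.1)].

Definition graph_state (R : realType) (N : nat) (E : rel 'I_N) : state R N :=
  foldr (fun e psi => CZ e.1 e.2 psi) (@plus_state R N) (edges E).

(* a single-qubit orthonormal measurement basis {|b 0>, |b 1>}:
   b s k = <k | b s> is the k-th amplitude of the basis vector for outcome s *)
Definition qubit_basis (R : realType) := bool -> bool -> R[i].

Definition qubit_onb (R : realType) (b : qubit_basis R) : Prop :=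
  forall s t : bool,
    cconj (b s false) * b t false + cconj (b s true) * b t true
    = (if s == t then 1 else 0).

Definition mbqc_prob (R : realType) (N : nat) (E : rel 'I_N)
    (B : 'I_N -> qubit_basis R) (s : bits N) : R :=
  normsq (\sum_(w : bits N)
            (\prod_(j < N) cconj (B j (s j) (w j))) * @graph_state R N E w).

Definition lin_post (q N : nat) (A : 'I_q -> 'I_N -> bool) (c : bits q)
    (s : bits N) : bits q :=
  [ffun i => c i (+) \big[addb/false]_(j < N) (A i j && s j)].

Definition mbqc_out_prob (R : realType) (N q : nat) (E : rel 'I_N)
    (B : 'I_N -> qubit_basis R) (A : 'I_q -> 'I_N -> bool) (c : bits q)
    (y : bits q) : R :=
  \sum_(s : bits N | lin_post A c s == y) mbqc_prob E B s.

Definition poly_bounded (f : nat -> nat) : Prop :=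
  exists C k : nat, forall n, (f n <= C * n.+1 ^ k)%N.

(* In the character basis of (Z/2)^q (characters v |-> (-1)^(v.a)) every gate
   D(theta, z) is diagonal: it multiplies the character a by
   cos theta + i sin theta (-1)^(z.a).  Hence the IQP* amplitude of y on
   input x is 2^-q sum_a (-1)^((x+y).a) prod_g (cos theta_g + i sin theta_g (-1)^(z_g.a)).
   Take the bipartite graph with one vertex per qubit and one per gate, gate g
   joined to the support of z_g, measure the qubit vertices in the X basis and
   the vertex of gate g in the basis whose outcome-s bra is
   cos theta_g <s| + i sin theta_g <1-s|.
   Summing out a gate vertex produces exactly the factor of gate g, times the
   sign (-1)^(b_g z_g.a) of its outcome b_g; together with the X outcomes t these
   are Pauli byproducts, undone by XOR-ing t and sum_g b_g z_g into the output.
   Every outcome string then has 2^-m times the IQP* probability of its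
   processed output, and each output has exactly 2^m preimages. *)

From HB Require Import structures.
From mathcomp Require Import all_boot all_order all_algebra.
From mathcomp Require Import complex.
From mathcomp Require Import reals trigo.
From mathcomp Require Import ring zify.

Set Implicit Arguments.
Unset Strict Implicit.
Unset Printing Implicit Defensive.

Import Order.TTheory GRing.Theory Num.Theory.
Local Open Scope ring_scope.
Local Open Scope complex_scope.

Section BitStrings.
Variable q : nat.
Implicit Types u v w : bits q.

Lemma bxorC u v : bxor u v = bxor v u.
Proof. by apply/ffunP => i; rewrite !ffunE addbC. Qed.

Lemma bxorA u v w : bxor u (bxor v w) = bxor (bxor u v) w.
Proof. by apply/ffunP => i; rewrite !ffunE addbA. Qed.

Lemma bxorK v : involutive (fun u : bits q => bxor u v).
Proof. by move=> u; apply/ffunP => i; rewrite !ffunE -addbA addbb addbF. Qed.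

Lemma bxorKl u : cancel (bxor u) (bxor u).
Proof. by move=> v; apply/ffunP => i; rewrite !ffunE addKb. Qed.

Lemma bxor_eq u v w : (bxor u v == w) = (u == bxor w v).
Proof. by apply: (can2_eq (bxorK v) (bxorK v)). Qed.

Lemma bxor_eq0 u v : (bxor u v == [ffun=> false]) = (u == v).
Proof. by rewrite bxor_eq; congr (_ == _); apply/ffunP => i; rewrite !ffunE. Qed.

Definition xor_span m (b : bits m) (z : 'I_m -> bits q) : bits q :=
  \big[@bxor q/[ffun=> false]]_(g < m | b g) z g.

Lemma xor_spanE m (b : bits m) (z : 'I_m -> bits q) i :
  xor_span b z i = \big[addb/false]_(g < m | b g) z g i.
Proof.
by apply: (big_morph (fun v : bits q => v i)) => [u v|]; rewrite ffunE.
Qed.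

End BitStrings.

Section Walsh.
Variable R : realType.
Local Notation C := R[i].

Definition walsh q (v a : bits q) : C :=
  \prod_(i < q) (if v i && a i then -1 else 1).

Lemma walsh_bxor q (u v a : bits q) : walsh (bxor u v) a = walsh u a * walsh v a.
Proof.
rewrite /walsh -big_split; apply: eq_bigr => i _; rewrite ffunE.
by case: (u i); case: (v i); case: (a i); rewrite /= ?mulr1 ?mul1r ?mulrNN ?mulr1.
Qed.

Lemma walsh_mul_self q (v a : bits q) : walsh v a * walsh v a = 1.
Proof.
by rewrite -walsh_bxor /walsh big1 // => i _; rewrite ffunE addbb.
Qed.

Lemma sum_walsh q (v : bits q) :
  \sum_(a : bits q) walsh v a = if v == [ffun=> false] then (2 ^ q)%:R else 0.
Proof.
rewrite /walsh -(bigA_distr_bigA (fun i b => if v i && b then -1 else 1 : C)) /=.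
under eq_bigr => i _ do rewrite big_bool /=.
case: eqP => [->|/eqP v_neq0].
  under eq_bigr => i _ do rewrite ffunE /=.
  by rewrite prodr_const card_ord natrX.
have [i vi] : exists i, v i.
  apply/existsP; apply: contraNT v_neq0 => /existsPn v0.
  by apply/eqP/ffunP => j; rewrite ffunE; apply/negbTE.
by rewrite (bigD1 i) //= vi addNr mul0r.
Qed.

Lemma walsh_xor_span q m (b : bits m) (z : 'I_m -> bits q) a :
  walsh (xor_span b z) a = \prod_(g < m | b g) walsh (z g) a.
Proof.
apply: (big_morph (fun v => walsh v a)) => [u v|]; first exact: walsh_bxor.
by rewrite /walsh big1 // => i _; rewrite ffunE.
Qed.

Definition gate_eigenvalue q (g : gate R q) (a : bits q) : C :=
  (cos g.1)%:C + 'i * (sin g.1)%:C * walsh g.2 a.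

Lemma apply_circuit_walsh q (gs : seq (gate R q)) (psi : state R q)
    (F : bits q -> C) :
  (forall y, psi y = \sum_a walsh y a * F a) ->
  forall y, apply_circuit gs psi y =
            \sum_a walsh y a * (F a * \prod_(g <- gs) gate_eigenvalue g a).
Proof.
elim: gs psi F => [|g gs IH] psi F psiE y.
  by rewrite /apply_circuit /= psiE; apply: eq_bigr => a _; rewrite big_nil mulr1.
rewrite [LHS](IH (Dgate g.1 g.2 psi) (fun a => F a * gate_eigenvalue g a)).
  by apply: eq_bigr => a _; rewrite big_cons !mulrA.
move=> w; rewrite /Dgate /Xz !psiE !mulr_sumr -big_split /=.
by apply: eq_bigr => a _; rewrite walsh_bxor /gate_eigenvalue; ring.
Qed.

Definition invsqrt2 : R := (Num.sqrt (2 : R))^-1.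

Lemma invsqrt2_pow2 k : invsqrt2 ^+ (2 * k) * 2 ^+ k = 1.
Proof.
rewrite exprM -exprMn /invsqrt2 exprVn sqr_sqrtr ?ler0n //.
by rewrite mulVf ?pnatr_eq0 // expr1n.
Qed.

Lemma ket_walsh q (u y : bits q) :
  ket R u y = \sum_a walsh y a * ((invsqrt2 ^+ (2 * q))%:C * walsh u a).
Proof.
under eq_bigr => a _ do rewrite mulrCA -walsh_bxor.
rewrite -mulr_sumr sum_walsh bxor_eq0 /ket.
case: eqP => _; last by rewrite mulr0.
have -> : ((2 ^ q)%:R : C) = ((2 : R) ^+ q)%:C by rewrite rmorphXn /= rmorph_nat natrX.
by rewrite -rmorphM /= invsqrt2_pow2.
Qed.

End Walsh.

Section Concat.
Variables q m : nat.

Lemma split_lshift (i : 'I_q) : split (lshift m i) = inl i.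
Proof. exact: (unsplitK (inl _)). Qed.

Lemma split_rshift (g : 'I_m) : split (rshift q g) = inr g.
Proof. exact: (unsplitK (inr _)). Qed.

Definition catb (a : bits q) (b : bits m) : bits (q + m) :=
  [ffun j => match split j with inl i => a i | inr g => b g end].

Lemma catb_lshift a b (i : 'I_q) : catb a b (lshift m i) = a i.
Proof. by rewrite ffunE split_lshift. Qed.

Lemma catb_rshift a b (g : 'I_m) : catb a b (rshift q g) = b g.
Proof. by rewrite ffunE split_rshift. Qed.

Definition lbits (w : bits (q + m)) : bits q := [ffun i => w (lshift m i)].
Definition rbits (w : bits (q + m)) : bits m := [ffun g => w (rshift q g)].

Lemma lbits_catb a b : lbits (catb a b) = a.
Proof. by apply/ffunP => i; rewrite ffunE catb_lshift. Qed.

Lemma rbits_catb a b : rbits (catb a b) = b.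
Proof. by apply/ffunP => g; rewrite ffunE catb_rshift. Qed.

Lemma catb_lrbits w : catb (lbits w) (rbits w) = w.
Proof.
apply/ffunP => j; rewrite ffunE; have := splitK j.
by case: (split j) => k /= <-; rewrite ffunE.
Qed.

Lemma sum_catb (V : nmodType) (F : bits (q + m) -> V) :
  \sum_w F w = \sum_a \sum_b F (catb a b).
Proof.
rewrite pair_bigA /= (reindex (fun p : bits q * bits m => catb p.1 p.2)) //.
exists (fun w => (lbits w, rbits w)) => [[a b] _|w _].
  by rewrite lbits_catb rbits_catb.
exact: catb_lrbits.
Qed.

End Concat.

Section GraphStates.
Variable R : realType.
Local Notation C := R[i].

Definition cz_sign N (E : rel 'I_N) (w : bits N) : C :=
  \prod_(e <- edges E) (if w e.1 && w e.2 then -1 else 1).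

Lemma graph_stateE N (E : rel 'I_N) (w : bits N) :
  graph_state R E w = (invsqrt2 R ^+ N)%:C * cz_sign E w.
Proof.
rewrite /graph_state /cz_sign mulrC; elim: (edges E) => [|e l IH].
  by rewrite big_nil mul1r.
by rewrite /= /CZ IH big_cons mulrA.
Qed.

Definition gate_graph q m (z : 'I_m -> bits q) : rel 'I_(q + m) :=
  fun j k => match split j, split k with inl i, inr g => z g i | _, _ => false end.

Lemma cz_sign_gate_graph q m (z : 'I_m -> bits q) a b :
  cz_sign (gate_graph z) (catb a b) =
  \prod_(i < q) \prod_(g < m) (if z g i && a i && b g then -1 else 1).
Proof.
rewrite /cz_sign /edges big_filter big_mkcond big_enum /=.
rewrite -(pair_bigA _ (fun j k : 'I_(q + m) =>
  if (j < k)%N && (gate_graph z j k || gate_graph z k j) then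
    (if catb a b j && catb a b k then -1 else 1) else 1 : C)) /=.
rewrite big_split_ord /= [X in _ * X]big1 ?mulr1; last first.
  move=> g _; rewrite big_split_ord /= !big1 ?mulr1 // => k _;
    rewrite /gate_graph ?split_lshift ?split_rshift /= ?andbF //.
  by rewrite ltnNge (leq_trans (ltnW (ltn_ord k))) ?leq_addr.
apply: eq_bigr => i _; rewrite big_split_ord /= big1 ?mul1r; last first.
  by move=> k _; rewrite /gate_graph !split_lshift /= andbF.
apply: eq_bigr => g _.
rewrite /gate_graph split_lshift split_rshift catb_lshift catb_rshift orbF.
by rewrite (leq_trans (ltn_ord i)) ?leq_addr /=; case: (z g i).
Qed.

End GraphStates.

Section Bases.
Variable R : realType.
Local Notation C := R[i].

Lemma cconjE (z : C) : cconj z = z^*.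
Proof. by case: z. Qed.

Lemma normsq_scale (r : R) (z : C) : normsq (r%:C * z) = r ^+ 2 * normsq z.
Proof. by case: z => a b; rewrite /normsq /=; ring. Qed.

Definition xbasis : qubit_basis R :=
  fun s k => (if s && k then -1 else 1) * (invsqrt2 R)%:C.

Definition gate_basis (th : R) : qubit_basis R :=
  fun s k => if s == k then (cos th)%:C else - 'i * (sin th)%:C.

Lemma xbasis_onb : qubit_onb xbasis.
Proof.
have half : invsqrt2 R ^+ 2 * 2 = 1 by have := invsqrt2_pow2 R 1; rewrite expr1.
move=> s t; rewrite !cconjE /xbasis.
by case: s; case: t; apply/eqP; rewrite eq_complex /=; simpc;
  rewrite ?andbT //; apply/eqP; rewrite -half; ring.
Qed.

Lemma gate_basis_onb th : qubit_onb (gate_basis th).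
Proof.
move=> s t; rewrite !cconjE /gate_basis; have cs := cos2Dsin2 th.
by case: s; case: t => /=; apply/eqP; rewrite eq_complex /=; simpc;
  rewrite ?andbT ?andTb; apply/eqP; rewrite -?cs; ring.
Qed.

Lemma xbasis_overlap q (t a : bits q) :
  \prod_(i < q) cconj (xbasis (t i) (a i)) = ((invsqrt2 R) ^+ q)%:C * walsh R t a.
Proof.
have -> : ((invsqrt2 R) ^+ q)%:C = \prod_(i < q) (invsqrt2 R)%:C :> C.
  by rewrite prodr_const card_ord rmorphXn.
rewrite /walsh -big_split /=.
apply: eq_bigr => i _; rewrite cconjE /xbasis.
by case: (t i && a i); apply/eqP; rewrite eq_complex /=; simpc.
Qed.

(* Contracting one gate vertex against its neighbours' sign x = +-1 yields the
   gate eigenvalue, up to the byproduct x^s of the outcome s. *)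
Lemma gate_basis_overlap th (s : bool) (x : C) : x * x = 1 ->
  cconj (gate_basis th s false) + cconj (gate_basis th s true) * x
  = (if s then x else 1) * ((cos th)%:C + 'i * (sin th)%:C * x).
Proof.
move=> xx; have conj_real (r : R) : cconj r%:C = r%:C by rewrite cconjE conjc_real.
have conj_mi : cconj (- 'i * (sin th)%:C) = 'i * (sin th)%:C.
  by apply/eqP; rewrite eq_complex /=; simpc.
case: s; rewrite /gate_basis !eqxx -?[false == true]/false -?[true == false]/false.
  by rewrite conj_real conj_mi mulrDr mulrCA xx; ring.
by rewrite conj_real conj_mi; ring.
Qed.

End Bases.

Section Embedding.
Variables (R : realType) (q : nat) (gs : seq (gate R q)).
Local Notation C := R[i].
Local Notation m := (size gs).
Local Notation rho := (invsqrt2 R).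

Definition gate_at (g : 'I_m) : gate R q := nth (0, [ffun=> false]) gs g.
Definition gate_support (g : 'I_m) : bits q := (gate_at g).2.

Definition mbqc_graph : rel 'I_(q + m) := gate_graph gate_support.

Definition mbqc_basis (j : 'I_(q + m)) : qubit_basis R :=
  match split j with inl _ => xbasis R | inr g => gate_basis (gate_at g).1 end.

Definition mbqc_readout (i : 'I_q) (j : 'I_(q + m)) : bool :=
  match split j with inl k => k == i | inr g => gate_support g i end.

Definition walsh_amp (v : bits q) : C :=
  \sum_a walsh R v a * \prod_(g <- gs) gate_eigenvalue g a.

Lemma iqp_amplitude (x y : bits q) :
  apply_circuit gs (ket R x) y = (rho ^+ (2 * q))%:C * walsh_amp (bxor y x).
Proof.
rewrite (apply_circuit_walsh gs (F := fun a => (rho ^+ (2 * q))%:C * walsh R x a));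
  last by move=> w; rewrite ket_walsh.
rewrite /walsh_amp mulr_sumr; apply: eq_bigr => a _; rewrite walsh_bxor; ring.
Qed.

Lemma gate_vertices_contraction (a : bits q) (b : bits m) :
  \sum_(beta : bits m) \prod_(g < m)
     (cconj (gate_basis (gate_at g).1 (b g) (beta g)) *
      \prod_(i < q) (if gate_support g i && a i && beta g then -1 else 1))
  = walsh R (xor_span b gate_support) a * \prod_(g <- gs) gate_eigenvalue g a.
Proof.
rewrite -(bigA_distr_bigA (fun g (x : bool) => cconj (gate_basis (gate_at g).1 (b g) x) *
  \prod_(i < q) (if gate_support g i && a i && x then -1 else 1))) /=.
have signs (g : 'I_m) (x : bool) :
    \prod_(i < q) (if gate_support g i && a i && x then -1 else 1) =
    if x then walsh R (gate_support g) a else 1 :> C.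
  by case: x; [apply: eq_bigr => i _; rewrite andbT | apply: big1 => i _; rewrite andbF].
under eq_bigr => g _ do rewrite big_bool /= addrC !signs mulr1
  (gate_basis_overlap _ _ (walsh_mul_self _ _ _)).
rewrite big_split /= walsh_xor_span -big_mkcond /=; congr (_ * _).
by rewrite (big_nth (0, [ffun=> false])) big_mkord.
Qed.

Lemma mbqc_amplitude (t : bits q) (b : bits m) :
  \sum_(w : bits (q + m))
     (\prod_j cconj (mbqc_basis j (catb t b j) (w j))) * graph_state R mbqc_graph w
  = (rho ^+ q)%:C * (rho ^+ (q + m))%:C *
    walsh_amp (bxor t (xor_span b gate_support)).
Proof.
rewrite sum_catb /walsh_amp mulr_sumr; apply: eq_bigr => a _.
have bases_split (beta : bits m) :
    \prod_j cconj (mbqc_basis j (catb t b j) (catb a beta j)) =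
    (rho ^+ q)%:C * walsh R t a *
    \prod_(g < m) cconj (gate_basis (gate_at g).1 (b g) (beta g)).
  rewrite big_split_ord -xbasis_overlap; congr (_ * _); apply: eq_bigr => k _;
    by rewrite /mbqc_basis ?split_lshift ?split_rshift ?catb_lshift ?catb_rshift.
rewrite walsh_bxor -[_ * _ * \prod_(g <- gs) _]mulrA -gate_vertices_contraction !mulr_sumr.
apply: eq_bigr => beta _.
rewrite bases_split graph_stateE /mbqc_graph cz_sign_gate_graph exchange_big /=.
rewrite big_split /=; ring.
Qed.

Lemma lin_post_catb (c t : bits q) (b : bits m) :
  lin_post mbqc_readout c (catb t b) = bxor c (bxor t (xor_span b gate_support)).
Proof.
apply/ffunP => i; rewrite !ffunE xor_spanE big_split_ord /=; congr (_ (+) (_ (+) _)).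
  rewrite (bigD1 i) //= /mbqc_readout split_lshift eqxx catb_lshift big1 ?addbF //.
  by move=> k /negbTE; rewrite split_lshift => ->.
rewrite [RHS]big_mkcond; apply: eq_bigr => g _.
by rewrite /mbqc_readout split_rshift catb_rshift andbC; case: (b g).
Qed.

Lemma mbqc_prob_readout (x : bits q) (s : bits (q + m)) :
  mbqc_prob mbqc_graph mbqc_basis s =
  rho ^+ (2 * m) * normsq (apply_circuit gs (ket R x) (lin_post mbqc_readout x s)).
Proof.
rewrite -(catb_lrbits s) /mbqc_prob mbqc_amplitude lin_post_catb iqp_amplitude.
rewrite [bxor (bxor x _) x]bxorC bxorKl.
rewrite -rmorphM -exprD !normsq_scale -!exprM mulrA -exprD.
by congr (_ ^+ _ * _); lia.
Qed.

Lemma card_readout_fibre (x y : bits q) :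
  #|[pred s : bits (q + m) | lin_post mbqc_readout x s == y]| = (2 ^ m)%N.
Proof.
rewrite -sum1_card big_mkcond sum_catb exchange_big /=.
under eq_bigr => b _ do under eq_bigr => t _ do
  rewrite inE lin_post_catb bxorC -bxorA bxor_eq.
under eq_bigr => b _ do rewrite -big_mkcond big_pred1_eq.
by rewrite sum1_card card_ffun card_bool card_ord.
Qed.

Lemma mbqc_out_probE (x y : bits q) :
  mbqc_out_prob mbqc_graph mbqc_basis mbqc_readout x y =
  normsq (apply_circuit gs (ket R x) y).
Proof.
rewrite /mbqc_out_prob (eq_bigr (fun=> rho ^+ (2 * m) *
  normsq (apply_circuit gs (ket R x) y))) => [|s /eqP <-]; last first.
  exact: mbqc_prob_readout.
rewrite sumr_const card_readout_fibre -mulr_natl natrX mulrCA.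
by rewrite mulrA invsqrt2_pow2 mul1r.
Qed.

End Embedding.

Lemma poly_boundedD (f g : nat -> nat) :
  poly_bounded f -> poly_bounded g -> poly_bounded (fun n => f n + g n)%N.
Proof.
move=> [Cf [kf f_le]] [Cg [kg g_le]]; exists (Cf + Cg)%N, (kf + kg)%N => n.
rewrite mulnDl leq_add //.
  by rewrite (leq_trans (f_le n)) // leq_mul2l leq_pexp2l ?leq_addr ?orbT.
by rewrite (leq_trans (g_le n)) // leq_mul2l leq_pexp2l ?leq_addl ?orbT.
Qed.

Local Close Scope complex_scope.

Theorem lemma3 (R : realType) (qf : nat -> nat)
    (gs : forall n : nat, seq (gate R (qf n))) :
  (forall n : nat, (n <= qf n)%N) ->
  poly_bounded qf ->
  poly_bounded (fun n => size (gs n)) ->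
  (forall (n : nat) (g : gate R (qf n)), g \in gs n -> gate_ok g) ->
  exists Nf : nat -> nat,
    poly_bounded Nf /\
    forall n : nat,
      exists (E : rel 'I_(Nf n)) (B : 'I_(Nf n) -> qubit_basis R),
        (forall j : 'I_(Nf n), qubit_onb (B j)) /\
        forall x : bits n,
          exists (A : 'I_(qf n) -> 'I_(Nf n) -> bool) (c : bits (qf n)),
            forall y : bits (qf n),
              mbqc_out_prob E B A c y = iqp_prob (gs n) x y.
Proof.
move=> _ qf_poly size_poly _.
exists (fun n => qf n + size (gs n))%N; split; first exact: poly_boundedD.
move=> n; exists (@mbqc_graph _ _ (gs n)), (@mbqc_basis _ _ (gs n)); split.
  by move=> j; rewrite /mbqc_basis; case: (split j) => g;
    [exact: xbasis_onb | exact: gate_basis_onb].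
move=> x; exists (@mbqc_readout _ _ (gs n)), (iqp_input (qf n) x) => y.
exact: mbqc_out_probE.
Qed.
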